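(* Let $G$ be a left-orderable group acting on its space $\mathcal{LO}(G)$ of left-orderings by conjugation. Then every left-ordering whose orbit under this action is finite is Conradian.
   Context: A left-ordering is a total order invariant under left multiplication; it is Conradian if for all $f\succ id$, $g\succ id$ there is $n\in\mathbb{N}$ with $fg^n\succ g$. The action of $g\in G$ sends $\preceq$ to $\preceq_g$, defined by $h\succ_g f$ iff $ghg^{-1}\succ gfg^{-1}$. *)

From Stdlib Require Import List.

Definition is_group {G : Type} (mul : G -> G -> G) (e : G) (inv : G -> G) : Prop :=
  (forall a b c, mul a (mul b c) = mul (mul a b) c) /\
  (forall a, mul e a = a) /\ (forall a, mul a e = a) /\
  (forall a, mul (inv a) a = e) /\ (forall a, mul a (inv a) = e).

Definition gpow {G : Type} (mul : G -> G -> G) (e : G) (g : G) (n : nat) : G :=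
  Nat.iter n (fun x => mul x g) e.

Definition is_left_ordering {G : Type} (mul : G -> G -> G) (lt : G -> G -> Prop) : Prop :=
  (forall a, ~ lt a a) /\
  (forall a b c, lt a b -> lt b c -> lt a c) /\
  (forall a b, lt a b \/ a = b \/ lt b a) /\
  (forall g a b, lt a b -> lt (mul g a) (mul g b)).

Definition conradian {G : Type} (mul : G -> G -> G) (e : G) (lt : G -> G -> Prop) : Prop :=
  forall f g, lt e f -> lt e g -> exists n : nat, lt g (mul f (gpow mul e g (S n))).

Definition conj_act {G : Type} (mul : G -> G -> G) (inv : G -> G) (g : G)
  (lt : G -> G -> Prop) : G -> G -> Prop :=
  fun f h => lt (mul (mul g f) (inv g)) (mul (mul g h) (inv g)).

Definition finite_orbit {G : Type} (mul : G -> G -> G) (inv : G -> G)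
  (lt : G -> G -> Prop) : Prop :=
  exists l : list (G -> G -> Prop), forall g, In (conj_act mul inv g lt) l.

(* Since the conjugation orbit of the ordering is finite, two powers of g
   conjugate it to the same ordering, so some power c = g^(n+1) fixes it:
   x < y iff c x c^-1 < c y c^-1.  Then 1 < f gives 1 < c^-1 f c, i.e.
   c < f c, and g <= c because g > 1; hence g < f g^(n+1). *)
From Stdlib Require Import List Arith Lia Classical.

Lemma finite_cover_not_injective {A : Type} (l : list A) (F : nat -> A) :
  (forall i, In (F i) l) -> exists i j, i < j /\ F i = F j.
Proof.
  intros Hcover. apply NNPP. intros Hno.
  assert (Hinj : forall i j, F i = F j -> i = j).
  { intros i j Hij. destruct (Nat.lt_total i j) as [h|[h|h]]; auto;
      exfalso; apply Hno; eauto. }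
  assert (Hnodup : NoDup (map F (seq 0 (S (length l))))).
  { apply NoDup_map_NoDup_ForallPairs; [|apply seq_NoDup].
    intros x y _ _; apply Hinj. }
  assert (Hincl : incl (map F (seq 0 (S (length l)))) l).
  { intros x Hx. apply in_map_iff in Hx. destruct Hx as [k [<- _]]. apply Hcover. }
  pose proof (NoDup_incl_length Hnodup Hincl) as Hlen.
  rewrite length_map, length_seq in Hlen. lia.
Qed.

Definition conjg {G : Type} (mul : G -> G -> G) (inv : G -> G) (x y : G) : G :=
  mul (mul x y) (inv x).

Section Group.

Context {G : Type} {mul : G -> G -> G} {e : G} {inv : G -> G} (HG : is_group mul e inv).

Lemma mulA a b c : mul a (mul b c) = mul (mul a b) c.
Proof. apply HG. Qed.

Lemma mul1g a : mul e a = a.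
Proof. apply HG. Qed.

Lemma mulg1 a : mul a e = a.
Proof. apply HG. Qed.

Lemma mulVg a : mul (inv a) a = e.
Proof. apply HG. Qed.

Lemma mulgV a : mul a (inv a) = e.
Proof. apply HG. Qed.

Lemma mulKg a b : mul (inv a) (mul a b) = b.
Proof. now rewrite mulA, mulVg, mul1g. Qed.

Lemma mulKVg a b : mul a (mul (inv a) b) = b.
Proof. now rewrite mulA, mulgV, mul1g. Qed.

Lemma mulgK a b : mul (mul b a) (inv a) = b.
Proof. now rewrite <- mulA, mulgV, mulg1. Qed.

Lemma invMg a b : inv (mul a b) = mul (inv b) (inv a).
Proof.
  assert (Hright : mul (mul a b) (mul (inv b) (inv a)) = e).
  { now rewrite <- mulA, mulKVg, mulgV. }
  now rewrite <- (mulKg (mul a b) (mul (inv b) (inv a))), Hright, mulg1.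
Qed.

Lemma invgK a : inv (inv a) = a.
Proof. rewrite <- (mulKg (inv a) a) at 2. now rewrite mulVg, mulg1. Qed.

Lemma conjgM a b y : conjg mul inv (mul a b) y = conjg mul inv a (conjg mul inv b y).
Proof. unfold conjg. now rewrite invMg, !mulA. Qed.

Lemma conjgKV a y : conjg mul inv a (conjg mul inv (inv a) y) = y.
Proof. unfold conjg. now rewrite invgK, !mulA, mulgV, mul1g, mulgK. Qed.

Lemma conjg1 a : conjg mul inv a e = e.
Proof. unfold conjg. now rewrite mulg1, mulgV. Qed.

Lemma gpowD g a b : gpow mul e g (a + b) = mul (gpow mul e g a) (gpow mul e g b).
Proof.
  induction b as [|b IH]; simpl.
  - now rewrite Nat.add_0_r, mulg1.
  - rewrite Nat.add_succ_r. unfold gpow in *. simpl. now rewrite IH, mulA.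
Qed.

Lemma gpowSl g n : gpow mul e g (S n) = mul g (gpow mul e g n).
Proof. rewrite <- (mul1g g) at 2. exact (gpowD g 1 n). Qed.

End Group.

Section Ordering.

Context {G : Type} {mul : G -> G -> G} {e : G} {inv : G -> G} (HG : is_group mul e inv).
Context {lt : G -> G -> Prop} (Hlt : is_left_ordering mul lt).

Lemma lt_trans a b c : lt a b -> lt b c -> lt a c.
Proof. apply Hlt. Qed.

Lemma lt_mul2l g a b : lt a b -> lt (mul g a) (mul g b).
Proof. apply Hlt. Qed.

Lemma gpow_ge1 g : lt e g -> forall n, e = gpow mul e g n \/ lt e (gpow mul e g n).
Proof.
  intros Hg n. induction n as [|n IH]; [now left|]. right.
  assert (Hstep : lt (gpow mul e g n) (gpow mul e g (S n))).
  { rewrite <- (mulg1 HG (gpow mul e g n)) at 1. now apply lt_mul2l. }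
  destruct IH as [IH|IH].
  - now rewrite IH at 1.
  - exact (lt_trans _ _ _ IH Hstep).
Qed.

Lemma le_gpowS g : lt e g -> forall n, g = gpow mul e g (S n) \/ lt g (gpow mul e g (S n)).
Proof.
  intros Hg n. rewrite (gpowSl HG).
  destruct (gpow_ge1 g Hg n) as [<-|Hn].
  - left. now rewrite (mulg1 HG).
  - right. rewrite <- (mulg1 HG g) at 1. now apply lt_mul2l.
Qed.

Definition conj_invariant (c : G) : Prop :=
  forall u w, lt (conjg mul inv c u) (conjg mul inv c w) <-> lt u w.

Lemma conj_act_eq_invariant c a :
  conj_act mul inv (mul c a) lt = conj_act mul inv a lt -> conj_invariant c.
Proof.
  intros Heq u w.
  pose proof (f_equal (fun R => R (conjg mul inv (inv a) u) (conjg mul inv (inv a) w)) Heq)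
    as Hprop.
  change (lt (conjg mul inv (mul c a) (conjg mul inv (inv a) u))
              (conjg mul inv (mul c a) (conjg mul inv (inv a) w))
          = lt (conjg mul inv a (conjg mul inv (inv a) u))
              (conjg mul inv a (conjg mul inv (inv a) w))) in Hprop.
  rewrite !(conjgM HG), !(conjgKV HG) in Hprop.
  now rewrite Hprop.
Qed.

Lemma conj_invariant_lt_mulr c f : conj_invariant c -> lt e f -> lt c (mul f c).
Proof.
  intros Hc Hf.
  assert (Hconj : lt e (mul (inv c) (mul f c))).
  { apply Hc. rewrite (conjg1 HG). unfold conjg.
    now rewrite (mulKVg HG), (mulgK HG). }
  apply (lt_mul2l c) in Hconj.
  now rewrite (mulg1 HG), (mulKVg HG) in Hconj.
Qed.

End Ordering.

Theorem mainTheorem20 (G : Type) (mul : G -> G -> G) (e : G) (inv : G -> G)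
  (HG : is_group mul e inv)
  (Hlo : exists lt0 : G -> G -> Prop, is_left_ordering mul lt0)
  (lt : G -> G -> Prop) (Hlt : is_left_ordering mul lt)
  (Hfin : finite_orbit mul inv lt) :
  conradian mul e lt.
Proof.
  intros f g Hf Hg.
  destruct Hfin as [l Hl].
  destruct (finite_cover_not_injective l
              (fun i => conj_act mul inv (gpow mul e g i) lt) (fun i => Hl _))
    as [i [j [Hij Heq]]].
  destruct (j - i) as [|n] eqn:Hd; [lia|].
  replace j with (S n + i) in Heq by lia.
  rewrite (gpowD HG) in Heq.
  exists n.
  assert (Hc : lt (gpow mul e g (S n)) (mul f (gpow mul e g (S n)))).
  { apply (conj_invariant_lt_mulr HG Hlt); [|exact Hf].
    exact (conj_act_eq_invariant HG _ _ (eq_sym Heq)). }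
  destruct (le_gpowS HG Hlt g Hg n) as [Hgc|Hgc].
  - now rewrite Hgc at 1.
  - exact (lt_trans Hlt _ _ _ Hgc Hc).
Qed.
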